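(* For every set $S\subseteq V$, if $R_j$ is drawn from $\Omega^n$ and $X_j(S)=\min\{1,|S\cap R_j|\}$, then $$\mathbb{B}(S)=\Phi\cdot\mathbb{E}[X_j(S)]+\sum_{v\in S}(1-\gamma(v))\,b(v)=\Gamma\cdot\mathbb{E}[Z_j(S)],$$ where $Z_j(S)=\frac{\Phi}{\Gamma}X_j(S)+\sum_{v\in S}(1-\gamma(v))\frac{b(v)}{\Gamma}$.
   Context: Let $G=(V,E)$ be a directed graph with $n=|V|$ in which each edge $(u,v)$ has probability $p(u,v)\in(0,1)$ (Independent Cascade model). A random sample graph $g$ keeps each edge $e$ independently with probability $p(e)$. Let $R(g,S)$ be the set of nodes reachable from $S$ in $g$. Each node $u$ has benefit $b(u)\ge 0$. The benefit function is $\mathbb{B}(S)=\mathbb{E}_g\big[\sum_{u\in R(g,S)}b(u)\big]$. Let $\Gamma=\sum_{u\in V}b(u)>0$. For a node $u$ with in-neighbour set $N_{in}(u)$, let $\gamma(u)=1-\prod_{v\in N_{in}(u)}(1-p(v,u))$. Let $\Phi=\sum_{u}\gamma(u)b(u)>0$. IBS distribution $\Omega^n$: pick a source node $u$ with probability $\gamma(u)b(u)/\Phi$. Then output the set of nodes that can reach $u$ in a random sample graph $g$, conditioned on the event that at least one in-edge of $u$ is present in $g$. *)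

From HB Require Import structures.
From mathcomp Require Import all_boot all_order all_algebra.
Set Implicit Arguments. Unset Strict Implicit. Unset Printing Implicit Defensive.
Import Order.TTheory GRing.Theory Num.Theory.
Local Open Scope ring_scope.

Section IC.
Variables (R : realFieldType) (V : finType).
(* E : set of directed edges (u,v); p : edge probabilities; b : benefits *)
Variables (E : {set V * V}) (p : V * V -> R) (b : V -> R).

Definition sample_prob (g : {set V * V}) : R :=
  \prod_(e in E) (if e \in g then p e else 1 - p e).

Definition reach (g : {set V * V}) (x y : V) : bool :=
  connect (fun a c => (a, c) \in g) x y.

Definition reach_set (g : {set V * V}) (S : {set V}) : {set V} :=
  [set u | [exists s in S, reach g s u]].

Definition Eg (f : {set V * V} -> R) : R :=
  \sum_(g : {set V * V} | g \subset E) sample_prob g * f g.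

Definition benefit (S : {set V}) : R :=
  Eg (fun g => \sum_(u in reach_set g S) b u).

Definition Gamma : R := \sum_(u : V) b u.

Definition in_nbrs (u : V) : {set V} := [set v | (v, u) \in E].

Definition gamma (u : V) : R := 1 - \prod_(v in in_nbrs u) (1 - p (v, u)).

Definition Phi : R := \sum_(u : V) gamma u * b u.

Definition rev_reach (g : {set V * V}) (u : V) : {set V} :=
  [set v | reach g v u].

Definition has_in_edge (g : {set V * V}) (u : V) : bool :=
  [exists v, (v, u) \in g].

(* probability that the IBS distribution outputs the set T:
   source u chosen w.p. gamma u * b u / Phi, then the reverse reachable set of u
   in g, conditioned on has_in_edge g u (conditional probability = joint / gamma u,
   since Pr[has_in_edge g u] = gamma u). *)
Definition IBS_prob (T : {set V}) : R :=
  \sum_(u : V) (gamma u * b u / Phi) *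
     (Eg (fun g => if has_in_edge g u && (rev_reach g u == T) then 1 else 0)
      / Eg (fun g => if has_in_edge g u then 1 else 0)).

(* expectation w.r.t. Omega^n *)
Definition E_IBS (f : {set V} -> R) : R :=
  \sum_(T : {set V}) IBS_prob T * f T.

Definition X_ (S T : {set V}) : R := (minn 1 #|S :&: T|)%:R.

Definition Z_ (S T : {set V}) : R :=
  Phi / Gamma * X_ S T + \sum_(v in S) (1 - gamma v) * (b v / Gamma).

End IC.
Arguments X_ {R V} S T.

From HB Require Import structures.
From mathcomp Require Import all_boot all_order all_algebra.
From mathcomp Require Import ring.
Import Order.TTheory GRing.Theory Num.Theory.
Local Open Scope ring_scope.

Set Implicit Arguments.
Unset Strict Implicit.

(* A node u is reached from S in g either because u is in S, or
   because u has an in-edge in g and some node of S reaches u, i.e. S meets the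
   reverse reachable set of u.  Whether u has an in-edge is an event of
   probability gamma u, so
     Pr[u reached] = Pr[in-edge of u and S meets rev_reach u] + [u in S] (1 - gamma u).
   Weighting by b u and summing over u, the first terms add up to Phi times the
   expectation of X_ S under the IBS distribution, whose source u is drawn with
   weight gamma u * b u / Phi and whose output is drawn conditionally on the
   in-edge event; the gamma u factors cancel.  The second equality is
   linearity of expectation, the IBS distribution having total mass 1. *)

Lemma sum_subsets_prod (R : comNzRingType) (T : finType) (E : {set T})
    (F : T -> bool -> R) :
  \sum_(g : {set T} | g \subset E) \prod_(e in E) F e (e \in g) =
  \prod_(e in E) (F e true + F e false).
Proof.
pose Fin e := if e \in E then F e true else 0.
pose Fout e := if e \in E then F e false else 1.
have -> : \prod_(e in E) (F e true + F e false) = \prod_e (Fin e + Fout e).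
  rewrite big_mkcond; apply: eq_bigr => e _; rewrite /Fin /Fout.
  by case: (e \in E); rewrite ?add0r.
rewrite bigA_distr /= [RHS](bigID (fun J : {set T} => J \subset E)) /=.
rewrite [X in _ = _ + X]big1 ?addr0; last first.
  move=> J /subsetPn [e eJ eNE].
  by rewrite (bigD1 e) //= eJ /Fin (negbTE eNE) mul0r.
apply: eq_bigr => J sJE; rewrite [LHS]big_mkcond; apply: eq_bigr => e _.
rewrite /Fin /Fout; case eE: (e \in E); first by case: (e \in J).
by rewrite (contraFF (subsetP sJE e) eE).
Qed.

Section SampleGraphs.
Variables (R : realFieldType) (V : finType) (E : {set V * V}) (p : V * V -> R).
Hypothesis p01 : forall e, e \in E -> 0 <= p e <= 1.

Lemma sample_prob_ge0 g : 0 <= sample_prob E p g.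
Proof.
apply: prodr_ge0 => e eE; have /andP[p_ge0 p_le1] := p01 eE.
by case: (e \in g); rewrite ?subr_ge0.
Qed.

Lemma eq_Eg f h :
  (forall g : {set V * V}, g \subset E -> f g = h g) -> Eg E p f = Eg E p h.
Proof. by move=> fh; apply: eq_bigr => g gE; rewrite fh. Qed.

Lemma EgD f h : Eg E p (fun g => f g + h g) = Eg E p f + Eg E p h.
Proof. by rewrite /Eg -big_split; apply: eq_bigr => g _; rewrite mulrDr. Qed.

Lemma EgN f : Eg E p (fun g => - f g) = - Eg E p f.
Proof. by rewrite /Eg -sumrN; apply: eq_bigr => g _; rewrite mulrN. Qed.

Lemma EgZ c f : Eg E p (fun g => c * f g) = c * Eg E p f.
Proof. by rewrite /Eg mulr_sumr; apply: eq_bigr => g _; rewrite mulrCA. Qed.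

Lemma Eg_sum (I : finType) (F : I -> {set V * V} -> R) :
  Eg E p (fun g => \sum_i F i g) = \sum_i Eg E p (F i).
Proof. by rewrite /Eg exchange_big; apply: eq_bigr => g _; rewrite mulr_sumr. Qed.

Lemma Eg_ge0 f : (forall g, 0 <= f g) -> 0 <= Eg E p f.
Proof. by move=> f_ge0; apply: sumr_ge0 => g _; rewrite mulr_ge0 ?sample_prob_ge0. Qed.

Lemma Eg1 : Eg E p (fun _ => 1) = 1.
Proof.
rewrite /Eg /sample_prob; under eq_bigr do rewrite mulr1.
rewrite (sum_subsets_prod E (fun e (x : bool) => if x then p e else 1 - p e)).
by apply: big1 => e _; rewrite addrC subrK.
Qed.

Lemma Eg_has_in_edge u :
  Eg E p (fun g => if has_in_edge g u then 1 else 0) = gamma E p u.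
Proof.
pose no_in_edge (g : {set V * V}) :=
  \prod_(e in E) (if (e.2 == u) && (e \in g) then 0 else 1 : R).
rewrite (@eq_Eg _ (fun g => 1 - no_in_edge g)); last first.
  move=> g gE; rewrite /no_in_edge /has_in_edge.
  case: existsP => [[v vu_g]|no_edge].
    rewrite (bigD1 (v, u)) /=; last exact: (subsetP gE).
    by rewrite eqxx vu_g mul0r subr0.
  rewrite big1 ?subrr // => -[x y] _ /=.
  case: eqP => [->|] //=; case: ifP => // xu_g.
  by case: no_edge; exists x.
rewrite EgD EgN Eg1 /gamma; congr (_ - _).
rewrite /Eg /no_in_edge /sample_prob.
pose F e (x : bool) :=
  (if x then p e else 1 - p e) * (if (e.2 == u) && x then 0 else 1).
rewrite (eq_bigr (fun g : {set V * V} => \prod_(e in E) F e (e \in g)));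
  last by move=> g _; rewrite -big_split.
rewrite sum_subsets_prod.
have -> : \prod_(e in E) (F e true + F e false) =
          \prod_(e in E | e.2 == u) (1 - p e).
  rewrite [RHS]big_mkcondr; apply: eq_bigr => e _; rewrite /F /= andbT andbF.
  by case: (e.2 == u); rewrite ?mulr0 ?mulr1 ?add0r // addrC subrK.
have -> : \prod_(v in in_nbrs E u) (1 - p (v, u)) =
          \prod_(e in [set (v, u) | v in in_nbrs E u]) (1 - p e).
  by rewrite big_imset // => x y _ _ [].
apply: eq_bigl => -[x y] /=.
apply/idP/imsetP => [/andP[xyE /eqP yu]|[v vin [-> ->]]].
  by exists x; rewrite ?yu // /in_nbrs inE -yu.
by move: vin; rewrite /in_nbrs inE => ->; rewrite eqxx.
Qed.

End SampleGraphs.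

Lemma X_existsE (R : realFieldType) (V : finType) (S T : {set V}) :
  X_ S T = if [exists s in S, s \in T] then 1 else 0 :> R.
Proof.
rewrite /X_; case: existsP => [[s /andP[sS sT]]|S_T_disjoint].
  have : (0 < #|S :&: T|)%N by apply/card_gt0P; exists s; rewrite inE sS.
  by move/minn_idPl ->.
suff -> : #|S :&: T| = 0%N by [].
apply/eqP; rewrite cards_eq0; apply/eqP/setP => x; rewrite !inE.
by apply/negP => /andP[xS xT]; apply: S_T_disjoint; exists x; rewrite xS.
Qed.

Lemma has_in_edge_reach (V : finType) (g : {set V * V}) (s u : V) :
  s != u -> reach g s u -> has_in_edge g u.
Proof.
move=> su /connectP[q]; case/lastP: q => [|q y] /=.
  by move=> _ eq_us; rewrite eq_us eqxx in su.
rewrite rcons_path last_rcons => /andP[_ last_y] ->.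
by apply/existsP; exists (last s q).
Qed.

Lemma reach_set_indicator_split (R : realFieldType) (V : finType)
    (g : {set V * V}) (S : {set V}) (u : V) :
  (if u \in reach_set g S then 1 else 0 : R) =
  (if has_in_edge g u then X_ S (rev_reach g u) else 0) +
  (if u \in S then 1 - (if has_in_edge g u then 1 else 0) else 0).
Proof.
rewrite X_existsE /reach_set inE.
have -> : [exists s in S, s \in rev_reach g u] = [exists s in S, reach g s u].
  by apply: eq_existsb => s; rewrite inE.
have S_reaches_u : u \in S -> [exists s in S, reach g s u].
  by move=> uS; apply/existsP; exists u; rewrite uS /reach connect0.
have in_edge_u : [exists s in S, reach g s u] -> u \notin S -> has_in_edge g u.
  move=> /existsP[s /andP[sS reach_su]] uNS.
  by apply: (has_in_edge_reach _ reach_su); apply: contraNneq uNS => <-.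
case uS: (u \in S); case Su: [exists s in S, reach g s u];
  case hu: (has_in_edge g u); rewrite /= ?subrr ?addr0 ?add0r ?subr0 //.
- by move: (S_reaches_u uS); rewrite Su.
- by move: (in_edge_u Su); rewrite uS hu => /(_ isT).
Qed.

Lemma sum_pick_indicator (R : pzSemiRingType) (T : finType) (H : bool) (r : T)
    (f : T -> R) :
  \sum_t (if H && (r == t) then 1 else 0) * f t = if H then f r else 0.
Proof.
case: H => /=; last by rewrite big1 // => t _; rewrite mul0r.
rewrite (bigD1 r) //= eqxx mul1r big1 ?addr0 // => t tNr.
by rewrite eq_sym (negbTE tNr) mul0r.
Qed.

Section IBSDistribution.
Variables (R : realFieldType) (V : finType) (E : {set V * V})
  (p : V * V -> R) (b : V -> R).
Hypothesis p01 : forall e, e \in E -> 0 <= p e <= 1.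

Local Notation Eg := (Eg E p).
Local Notation gamma := (gamma E p).
Local Notation Phi := (Phi E p b).

Lemma benefitE S :
  benefit E p b S =
  \sum_u b u * Eg (fun g => if has_in_edge g u then X_ S (rev_reach g u) else 0)
  + \sum_(v in S) (1 - gamma v) * b v.
Proof.
rewrite /benefit (@eq_Eg _ _ E p _
  (fun g => \sum_u b u * (if u \in reach_set g S then 1 else 0))); last first.
  move=> g _; rewrite [LHS]big_mkcond; apply: eq_bigr => u _.
  by case: (u \in _); rewrite ?mulr1 ?mulr0.
rewrite Eg_sum [X in _ = _ + X]big_mkcond -big_split; apply: eq_bigr => u _ /=.
under eq_Eg do rewrite reach_set_indicator_split.
rewrite EgZ EgD mulrDr; congr (_ + _).
case: (u \in S); last by rewrite /Eg big1 ?mulr0 // => g _; rewrite mulr0.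
by rewrite EgD EgN Eg1 Eg_has_in_edge mulrC.
Qed.

Definition ibs_joint (u : V) (T : {set V}) : R :=
  Eg (fun g => if has_in_edge g u && (rev_reach g u == T) then 1 else 0).

Lemma ibs_joint_ge0 u T : 0 <= ibs_joint u T.
Proof. by apply: Eg_ge0 => // g; case: ifP. Qed.

Lemma sum_ibs_joint (f : {set V} -> R) u :
  \sum_T ibs_joint u T * f T =
  Eg (fun g => if has_in_edge g u then f (rev_reach g u) else 0).
Proof.
under eq_bigr do rewrite mulrC -EgZ.
rewrite -Eg_sum; apply: eq_bigr => g _; congr (_ * _).
by rewrite -sum_pick_indicator; apply: eq_bigr => T _; rewrite mulrC.
Qed.

Lemma sum_ibs_joint1 u : \sum_T ibs_joint u T = gamma u.
Proof.
rewrite -Eg_has_in_edge -(sum_ibs_joint (fun _ => 1)).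
by apply: eq_bigr => T _; rewrite mulr1.
Qed.

(* The conditioning cancels: if gamma u = 0 then ibs_joint u T = 0 as well,
   so the junk value x / 0 = 0 does no harm. *)
Lemma IBS_probE T : IBS_prob E p b T = \sum_u b u / Phi * ibs_joint u T.
Proof.
apply: eq_bigr => u _; rewrite Eg_has_in_edge -/(ibs_joint u T).
have [gamma0|gamma_neq0] := eqVneq (gamma u) 0.
  have : \sum_T ibs_joint u T = 0 by rewrite sum_ibs_joint1.
  move/psumr_eq0P => /(_ (fun T _ => ibs_joint_ge0 u T)) /(_ T isT) ->.
  by rewrite gamma0 !mul0r !mulr0.
by rewrite -[RHS]mul1r -(divff gamma_neq0); ring.
Qed.

Lemma E_IBSE f :
  E_IBS E p b f = \sum_u b u / Phi * \sum_T ibs_joint u T * f T.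
Proof.
rewrite /E_IBS; under eq_bigr do rewrite IBS_probE mulr_suml.
rewrite exchange_big /=; apply: eq_bigr => u _; rewrite mulr_sumr.
by apply: eq_bigr => T _; rewrite mulrA.
Qed.

Hypothesis Phi_neq0 : Phi != 0.

Lemma Phi_E_IBS f :
  Phi * E_IBS E p b f =
  \sum_u b u * Eg (fun g => if has_in_edge g u then f (rev_reach g u) else 0).
Proof.
rewrite E_IBSE mulr_sumr; apply: eq_bigr => u _.
by rewrite sum_ibs_joint mulrA mulrCA mulfV // mulr1.
Qed.

Lemma IBS_prob_sum1 : \sum_T IBS_prob E p b T = 1.
Proof.
have := Phi_E_IBS (fun _ => 1); rewrite /E_IBS.
under eq_bigr do rewrite mulr1.
under [in RHS]eq_bigr do rewrite Eg_has_in_edge mulrC.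
by rewrite -/Phi -[X in _ = X -> _]mulr1 => /(mulfI Phi_neq0).
Qed.

Hypothesis Gamma_neq0 : Gamma b != 0.

Lemma Gamma_E_IBS_Z S :
  Gamma b * E_IBS E p b (Z_ E p b S) =
  Phi * E_IBS E p b (X_ S) + \sum_(v in S) (1 - gamma v) * b v.
Proof.
rewrite /E_IBS /Z_; under eq_bigr do rewrite mulrDr.
rewrite big_split /= -mulr_suml IBS_prob_sum1 mul1r mulrDr.
by congr (_ + _); rewrite !mulr_sumr; apply: eq_bigr => T _; field.
Qed.

End IBSDistribution.

Theorem lemma3 (R : realFieldType) (V : finType) (E : {set V * V})
    (p : V * V -> R) (b : V -> R)
    (hp : forall e, e \in E -> 0 < p e < 1)
    (hb : forall u, 0 <= b u)
    (hGamma : 0 < Gamma b)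
    (hPhi : 0 < Phi E p b)
    (S : {set V}) :
  benefit E p b S =
    Phi E p b * E_IBS E p b (X_ S) + \sum_(v in S) (1 - gamma E p v) * b v /\
  Phi E p b * E_IBS E p b (X_ S) + \sum_(v in S) (1 - gamma E p v) * b v =
    Gamma b * E_IBS E p b (Z_ E p b S).
Proof.
have p01 e : e \in E -> 0 <= p e <= 1.
  by move=> /hp /andP[p_gt0 p_lt1]; rewrite !ltW.
have Phi_neq0 : Phi E p b != 0 by rewrite gt_eqF.
split; first by rewrite benefitE Phi_E_IBS.
by rewrite Gamma_E_IBS_Z // gt_eqF.
Qed.
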